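(* For every DBI normal formula $\varphi$, the pointed action model $(\mathcal{U}_\varphi,0)$ is idempotent: for every pointed Kripke model $(\mathcal{M},w)$, the pointed updates $\bigl(\mathcal{M}\odot\mathcal{U}_\varphi,(w,0)\bigr)$ and $\bigl((\mathcal{M}\odot\mathcal{U}_\varphi)\odot\mathcal{U}_\varphi,((w,0),0)\bigr)$ are both defined and are isomorphic as pointed Kripke models.
   Context: Agents $\mathcal{A}=\{1,\dots,n\}$, $n>1$; language $\mathcal{L}$: $\varphi ::= p \mid \neg\varphi \mid (\varphi\wedge\varphi)\mid B_i\varphi$, $\top$ the usual tautology. Kripke model $\mathcal{M}=\langle S,R,V\rangle$ (nonempty $S$, $R_i\subseteq S\times S$, $V:\mathit{Prop}\to 2^S$), standard truth. Action model $\mathcal{U}=\langle E,Q,\mathsf{pre}\rangle$ (nonempty $E$, $Q_i\subseteq E\times E$, $\mathsf{pre}:E\to\mathcal{L}$). Pointed update of $(\mathcal{M},w)$ with $(\mathcal{U},\alpha)$, defined iff $\mathcal{M},w\vDash\mathsf{pre}(\alpha)$: with $T=\{(x,\beta)\in S\times E\mid\mathcal{M},x\vDash\mathsf{pre}(\beta)\}$, $\mathcal{M}\odot\mathcal{U}=\langle S^{\mathcal U},R^{\mathcal U},V^{\mathcal U}\rangle$ where $S^{\mathcal U}$ is the smallest subset of $T$ containing $(w,\alpha)$ closed under: $(x,\beta)\in S^{\mathcal U}$, $(u,\gamma)\in T$, $xR_iu$, $\beta Q_i\gamma$ imply $(u,\gamma)\in S^{\mathcal U}$; $R^{\mathcal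 U}_i$ relates $(x,\beta),(u,\gamma)\in S^{\mathcal U}$ iff $xR_iu$ and $\beta Q_i\gamma$; $V^{\mathcal U}(p)=\{(x,\beta)\in S^{\mathcal U}\mid x\in V(p)\}$; the result is the pointed model $(\mathcal{M}\odot\mathcal{U},(w,\alpha))$. Two pointed Kripke models are isomorphic if there is a bijection of worlds preserving the relations, the valuation and the point. Target agents: $\mathsf{ta}(p)=\varnothing$, $\mathsf{ta}(\neg\phi)=\mathsf{ta}(\phi)$, $\mathsf{ta}(\phi\wedge\psi)=\mathsf{ta}(\phi)\cup\mathsf{ta}(\psi)$, $\mathsf{ta}(B_i\phi)=\{i\}$. DBI formulas: $\varphi ::= B_i\xi \mid B_i(\xi\wedge\varphi)\mid(\varphi\wedge\varphi)\mid B_i\varphi$, $\xi$ purely propositional. DBI normal: $B_i\xi$ always; $B_i\varphi$, $B_i(\xi\wedge\varphi)$ iff $\varphi$ DBI normal and $i\notin\mathsf{ta}(\varphi)$; $\varphi\wedge\psi$ iff both DBI normal and $\mathsf{ta}(\varphi)\cap\mathsf{ta}(\psi)=\varnothing$. Action model $\mathcal{U}_\varphi=\langle E^\varphi,Q^\varphi,\mathsf{pre}^\varphi\rangle$ for DBI normal $\varphi$, recursively; always $E^\varphi=\{0,-1\}\sqcup D^\varphi$, $\varnothing\ne D^\varphi\subseteq\{1,2,\dots\}$, $\mathsf{pre}^\varphi(0)=\mathsf{pre}^\varphi(-1)=\top$; $\underline{Q}_j:=Q_j\cap((E\setminus\{0\})\times(E\setminus\{0\}))$. (1) $\varphi=B_i\xi$: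 $D=\{m\}$, $\mathsf{pre}(m)=\xi$, $Q_j=\{(0,-1),(m,-1),(-1,-1)\}$ ($j\ne i$), $Q_i=\{(0,m),(m,m),(-1,-1)\}$. (2) $\varphi=B_i\psi$: fresh $m\ge1$, $m\notin D^\psi$; $D^\varphi=D^\psi\sqcup\{m\}$; $\mathsf{pre}^\varphi$ extends $\mathsf{pre}^\psi$ with $\mathsf{pre}^\varphi(m)=\top$; $Q^\varphi_j=\underline{Q}^\psi_j\cup\{(0,-1)\}\cup\{(m,k)\mid(0,k)\in Q^\psi_j\}$ ($j\ne i$); $Q^\varphi_i=\underline{Q}^\psi_i\cup\{(0,m),(m,m)\}$. (3) $\varphi=B_i(\xi\wedge\psi)$: as (2) but $\mathsf{pre}^\varphi(m)=\xi$. (4) $\varphi=\psi\wedge\theta$: with $D^\psi\cap D^\theta=\varnothing$, $D^\varphi=D^\psi\sqcup D^\theta$, $\mathsf{pre}^\varphi=\mathsf{pre}^\psi\cup\mathsf{pre}^\theta$, $Q^\varphi_j=\underline{Q}^\psi_j\cup\underline{Q}^\theta_j\cup\{(0,k)\mid(0,k)\in Q^\psi_j\cup Q^\theta_j, k\in D^\psi\sqcup D^\theta\}\cup\{(0,-1)\mid\text{no such }k\text{ exists}\}$. *)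

From mathcomp Require Import all_boot all_order all_algebra.
Unset Printing Implicit Defensive.
Import GRing.Theory Num.Theory.

(* Agents are 'I_n (i.e. {0,...,n-1}, playing the role of {1,...,n});
   atomic propositions range over an arbitrary type P. *)
Inductive eform (n : nat) (P : Type) : Type :=
| Var of P
| Neg of eform n P
| And of eform n P & eform n P
| Bel of 'I_n & eform n P.
Arguments Var {n P}. Arguments Neg {n P}. Arguments And {n P}. Arguments Bel {n P}.

Definition Top {n : nat} {P : Type} (p0 : P) : eform n P :=
  Neg (And (Var p0) (Neg (Var p0))).

Fixpoint is_prop {n : nat} {P : Type} (f : eform n P) : bool :=
  match f with
  | Var _ => true
  | Neg g => is_prop g
  | And g h => is_prop g && is_prop h
  | Bel _ _ => false
  end.

Fixpoint ta {n : nat} {P : Type} (f : eform n P) : {set 'I_n} :=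
  match f with
  | Var _ => set0
  | Neg g => ta g
  | And g h => ta g :|: ta h
  | Bel i _ => [set i]
  end.

Inductive is_DBI {n : nat} {P : Type} : eform n P -> Prop :=
| DBI_B i xi : is_prop xi -> is_DBI (Bel i xi)
| DBI_BA i xi f : is_prop xi -> is_DBI f -> is_DBI (Bel i (And xi f))
| DBI_A f g : is_DBI f -> is_DBI g -> is_DBI (And f g)
| DBI_BB i f : is_DBI f -> is_DBI (Bel i f).

Inductive DBI_normal {n : nat} {P : Type} : eform n P -> Prop :=
| N_B i xi : is_prop xi -> DBI_normal (Bel i xi)
| N_BB i f : DBI_normal f -> i \notin ta f -> DBI_normal (Bel i f)
| N_BA i xi f : is_prop xi -> DBI_normal f -> i \notin ta f ->
    DBI_normal (Bel i (And xi f))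
| N_A f g : DBI_normal f -> DBI_normal g -> [disjoint ta f & ta g] ->
    DBI_normal (And f g).

Record KM (n : nat) (P : Type) := {
  st : Type;
  krel : 'I_n -> st -> st -> Prop;
  kval : P -> st -> Prop }.
Arguments st {n P}. Arguments krel {n P}. Arguments kval {n P}.

Fixpoint sat {n : nat} {P : Type} (M : KM n P) (x : st M) (f : eform n P) : Prop :=
  match f with
  | Var p => kval M p x
  | Neg g => ~ sat M x g
  | And g h => sat M x g /\ sat M x h
  | Bel i g => forall y, krel M i x y -> sat M y g
  end.
Arguments sat {n P} M x f.

Record PKM (n : nat) (P : Type) := { pm : KM n P; ppt : st pm }.
Arguments pm {n P}. Arguments ppt {n P}.

Record AM (n : nat) (P : Type) := {
  ev : Type;
  arel : 'I_n -> ev -> ev -> Prop;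
  pre : ev -> eform n P }.
Arguments ev {n P}. Arguments arel {n P}. Arguments pre {n P}.

Inductive inU {n : nat} {P : Type} (M : KM n P) (U : AM n P) (w : st M) (a : ev U)
  : st M * ev U -> Prop :=
| inU_base : inU M U w a (w, a)
| inU_step x b u c i :
    inU M U w a (x, b) -> sat M u (pre U c) -> krel M i x u -> arel U i b c ->
    inU M U w a (u, c).

Definition upd_model {n : nat} {P : Type} (M : KM n P) (U : AM n P) (w : st M) (a : ev U)
  : KM n P :=
  {| st := {p : st M * ev U | inU M U w a p};
     krel := fun i p q => krel M i (proj1_sig p).1 (proj1_sig q).1 /\
                          arel U i (proj1_sig p).2 (proj1_sig q).2;
     kval := fun x p => kval M x (proj1_sig p).1 |}.

(* the pointed update (M ⊙ U, (w, a)); it is *defined* iff update_defined holds *)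
Definition update_defined {n : nat} {P : Type} (Mw : PKM n P) (U : AM n P) (a : ev U) : Prop :=
  sat (pm Mw) (ppt Mw) (pre U a).

Definition pupdate {n : nat} {P : Type} (Mw : PKM n P) (U : AM n P) (a : ev U) : PKM n P :=
  {| pm := upd_model (pm Mw) U (ppt Mw) a;
     ppt := exist _ (ppt Mw, a) (inU_base (pm Mw) U (ppt Mw) a) : st (upd_model (pm Mw) U (ppt Mw) a) |}.

Definition pk_iso {n : nat} {P : Type} (A B : PKM n P) : Prop :=
  exists f : st (pm A) -> st (pm B),
    bijective f /\
    (forall i x y, krel (pm A) i x y <-> krel (pm B) i (f x) (f y)) /\
    (forall p x, kval (pm A) p x <-> kval (pm B) p (f x)) /\
    f (ppt A) = ppt B.

Local Open Scope ring_scope.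

(* Events are integers: E = {0,-1} ⊔ D with D a
   finite list of positive integers; Q j is a boolean relation on int and
   pre a function int -> eform (only its values on E matter).  UAM p0 phi D Q pre
   holds iff (E, Q, pre) is obtained from phi by the recursive construction
   (1)-(4), for some admissible choice of the fresh positive labels. *)
Inductive UAM {n : nat} {P : Type} (p0 : P)
  : eform n P -> seq int -> ('I_n -> rel int) -> (int -> eform n P) -> Prop :=
| UAM1 i xi (m : int) : is_prop xi -> 0 < m ->
    UAM p0 (Bel i xi) [:: m]
      (fun j e f => if j == i then
                      [|| (e == 0) && (f == m), (e == m) && (f == m)
                        | (e == -1) && (f == -1)]
                    else
                      [|| (e == 0) && (f == -1), (e == m) && (f == -1)
                        | (e == -1) && (f == -1)])
      (fun e => if e == m then xi else Top p0)
| UAM2 i psi D Q pr (m : int) : UAM p0 psi D Q pr -> 0 < m -> m \notin D ->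
    UAM p0 (Bel i psi) (m :: D)
      (fun j e f =>
         let uQ := [&& Q j e f, e != 0 & f != 0] in
         if j == i then [|| uQ, (e == 0) && (f == m) | (e == m) && (f == m)]
         else [|| uQ, (e == 0) && (f == -1) | (e == m) && Q j 0 f])
      (fun e => if e == m then Top p0 else pr e)
| UAM3 i xi psi D Q pr (m : int) : is_prop xi -> UAM p0 psi D Q pr -> 0 < m -> m \notin D ->
    UAM p0 (Bel i (And xi psi)) (m :: D)
      (fun j e f =>
         let uQ := [&& Q j e f, e != 0 & f != 0] in
         if j == i then [|| uQ, (e == 0) && (f == m) | (e == m) && (f == m)]
         else [|| uQ, (e == 0) && (f == -1) | (e == m) && Q j 0 f])
      (fun e => if e == m then xi else pr e)
| UAM4 psi th D1 Q1 pr1 D2 Q2 pr2 :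
    UAM p0 psi D1 Q1 pr1 -> UAM p0 th D2 Q2 pr2 -> all (fun k => k \notin D2) D1 ->
    UAM p0 (And psi th) (D1 ++ D2)
      (fun j e f =>
         [|| [&& Q1 j e f, e != 0 & f != 0],
             [&& Q2 j e f, e != 0 & f != 0],
             [&& e == 0, f \in D1 ++ D2 & (Q1 j 0 f || Q2 j 0 f)]
           | [&& e == 0, f == -1 & ~~ has (fun k => Q1 j 0 k || Q2 j 0 k) (D1 ++ D2)]])
      (fun e => if e \in D1 then pr1 e else pr2 e).

Definition am_of {n : nat} {P : Type} (D : seq int) (Q : 'I_n -> rel int)
  (pr : int -> eform n P) : AM n P :=
  {| ev := {e : int | e \in [:: 0, -1 & D]};
     arel := fun i a b => Q i (proj1_sig a) (proj1_sig b);
     pre := fun a => pr (proj1_sig a) |}.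

Definition ev0 {n : nat} {P : Type} (D : seq int) (Q : 'I_n -> rel int)
  (pr : int -> eform n P) : ev (am_of D Q pr) :=
  exist (fun e : int => e \in [:: 0, -1 & D]) 0 (mem_head _ _).

From mathcomp Require Import all_boot all_order all_algebra zify.
Import Order.TTheory.
From Stdlib Require Import ProofIrrelevance.

(* The action model U_phi has propositional preconditions and is functional:
   each Q_j relates an event to at most one event.  Functionality is proved
   along the construction of U_phi; at a conjunction psi /\ theta the only
   possible clash is an edge for the same agent j from 0 into D^psi and one
   into D^theta, which puts j in both ta psi and ta theta, excluded by DBI
   normality.  For a functional action model with propositional preconditions
   every world ((x, b), c) of the second update has c = b, so
   (x, b) |-> ((x, b), b) is an isomorphism; pre(0) = Top makes both updates
   defined. *)

Lemma sat_upd_model_prop {n : nat} {P : Type} (M : KM n P) (U : AM n P) w a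
    (x : st (upd_model M U w a)) (f : eform n P) :
  is_prop f -> sat (upd_model M U w a) x f <-> sat M (proj1_sig x).1 f.
Proof.
elim: f => [p|g IH|g IHg h IHh|i g IH] //= f_prop.
- by have [? ?] := IH f_prop; split=> nsat ?; apply: nsat; auto.
- case/andP: f_prop => /IHg [? ?] /IHh [? ?]; split; case; auto.
Qed.

Lemma sat_Top {n : nat} {P : Type} (M : KM n P) x (p0 : P) : sat M x (Top p0).
Proof. by case. Qed.

Section UpdateIdempotent.
Variables (n : nat) (P : Type) (Mw : PKM n P) (U : AM n P) (a : ev U).
Hypothesis pre_prop : forall e, is_prop (pre U e).
Hypothesis arel_functional : forall i e f g, arel U i e f -> arel U i e g -> f = g.

Let M := pm Mw.
Let MU := upd_model M U (ppt Mw) a.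
Let pt : st MU := ppt (pupdate Mw U a).

Lemma inU_diag (x : st MU) : inU MU U pt a (x, (proj1_sig x).2).
Proof.
case: x => p Hp; have Hp' := Hp; move: Hp; elim: Hp' => [|x b u c i Hxb IH sat_u Ru Qbc] Hp.
  by rewrite (proof_irrelevance _ Hp (inU_base M U _ a)); apply: inU_base.
apply: (@inU_step _ _ MU U pt a (exist _ (x, b) Hxb) b (exist _ (u, c) Hp) c i) => //.
exact/sat_upd_model_prop.
Qed.

Lemma inU_upd_snd q : inU MU U pt a q -> (proj1_sig q.1).2 = q.2.
Proof.
elim=> [|x b u c i _ IH _ [_ Qxu] Qbc] //=.
by rewrite IH in Qxu; apply: arel_functional Qxu Qbc.
Qed.

Definition upd_diag (x : st MU) : st (upd_model MU U pt a) :=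
  exist _ (x, (proj1_sig x).2) (inU_diag x).

Lemma pupdate_idem : pk_iso (pupdate Mw U a) (pupdate (pupdate Mw U a) U a).
Proof.
exists upd_diag; split; [|split; [|split]] => //.
- exists (fun y => (proj1_sig y).1); first by case.
  case=> [[x c] Hxc] /=; have /= snd_c := inU_upd_snd _ Hxc; subst c.
  by rewrite /upd_diag; congr exist; apply: proof_irrelevance.
- by move=> i x y /=; split=> [Rxy|[]//]; split=> //; apply: Rxy.2.
- by rewrite /upd_diag /=; congr exist; apply: proof_irrelevance.
Qed.

End UpdateIdempotent.

Section ActionModelU.
Context {n : nat} {P : Type} {p0 : P}.
Local Open Scope ring_scope.

Definition rel_dom (D : seq int) (Q : 'I_n -> rel int) :=
  forall j e f, Q j e f -> e \in [:: 0, -1 & D].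

Definition rel_functional (Q : 'I_n -> rel int) :=
  forall j e f1 f2, Q j e f1 -> Q j e f2 -> f1 = f2.

Definition rel_sink (Q : 'I_n -> rel int) := forall j f, Q j (-1) f -> f = -1.

Definition rel0_agents (T : {set 'I_n}) (Q : 'I_n -> rel int) :=
  forall j f, Q j 0 f -> f != -1 -> j \in T.

Definition bel_rel (i : 'I_n) (m : int) (Q : 'I_n -> rel int) : 'I_n -> rel int :=
  fun j e f =>
    let uQ := [&& Q j e f, e != 0 & f != 0] in
    if j == i then [|| uQ, (e == 0) && (f == m) | (e == m) && (f == m)]
    else [|| uQ, (e == 0) && (f == -1) | (e == m) && Q j 0 f].

Definition conj_rel (D1 D2 : seq int) (Q1 Q2 : 'I_n -> rel int) : 'I_n -> rel int :=
  fun j e f =>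
    [|| [&& Q1 j e f, e != 0 & f != 0],
        [&& Q2 j e f, e != 0 & f != 0],
        [&& e == 0, f \in D1 ++ D2 & (Q1 j 0 f || Q2 j 0 f)]
      | [&& e == 0, f == -1 & ~~ has (fun k => Q1 j 0 k || Q2 j 0 k) (D1 ++ D2)]].

Lemma rel_dom_fresh D Q m j f : rel_dom D Q -> 0 < m -> m \notin D -> Q j m f = false.
Proof.
move=> domQ m_gt0 mD; apply/negP => /domQ.
by rewrite !inE (negbTE mD) orbF; apply/negP; rewrite negb_or; apply/andP; split; apply/eqP; lia.
Qed.

Lemma bel_rel_functional {i m D Q} : 0 < m -> m \notin D -> rel_dom D Q ->
  rel_functional Q -> rel_functional (bel_rel i m Q).
Proof.
move=> m_gt0 mD domQ funQ j e f1 f2; rewrite /bel_rel.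
have Qm f : Q j m f = false by apply: rel_dom_fresh domQ m_gt0 mD.
case: (j == i) => /or3P[/and3P[A1 B1 C1]|/andP[/eqP E1 F1]|/andP[/eqP E1 F1]]
                  /or3P[/and3P[A2 B2 C2]|/andP[/eqP E2 F2]|/andP[/eqP E2 F2]];
  try subst e; first [lia | exact: funQ A1 A2 | exact: funQ F1 F2
                      | by rewrite Qm in A1 | by rewrite Qm in A2].
Qed.

Lemma conj_rel_functional {D1 D2 : seq int} {Q1 Q2} {T1 T2 : {set 'I_n}} :
  {in D1, forall k, 0 < k} -> {in D2, forall k, 0 < k} ->
  all (fun k => k \notin D2) D1 -> [disjoint T1 & T2] ->
  rel_dom D1 Q1 -> rel_dom D2 Q2 -> rel_sink Q1 -> rel_sink Q2 ->
  rel0_agents T1 Q1 -> rel0_agents T2 Q2 ->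
  rel_functional Q1 -> rel_functional Q2 -> rel_functional (conj_rel D1 D2 Q1 Q2).
Proof.
move=> D1_gt0 D2_gt0 disjD disjT dom1 dom2 sink1 sink2 ag1 ag2 fun1 fun2 j e f1 f2.
rewrite /conj_rel; have [->{e}|e_ne0] := eqVneq e 0.
- have cross f g : Q1 j 0 f -> f != -1 -> Q2 j 0 g -> g != -1 -> False.
    by move=> /ag1/[apply] jT1 /ag2/[apply]; rewrite (disjointFr disjT jT1).
  have D_ne_m1 f : f \in D1 ++ D2 -> f != -1.
    by rewrite mem_cat => /orP[/D1_gt0|/D2_gt0]; apply: contraTneq => ->.
  rewrite /= !andbF /=.
  case/orP=> [/andP[Df1 R1]|/andP[/eqP-> N1]]; case/orP=> [/andP[Df2 R2]|/andP[/eqP-> N2]] //.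
  + case/orP: R1 => A1; case/orP: R2 => A2; first [exact: fun1 A1 A2 | exact: fun2 A1 A2 | idtac].
    * by case: (cross _ _ A1 (D_ne_m1 _ Df1) A2 (D_ne_m1 _ Df2)).
    * by case: (cross _ _ A2 (D_ne_m1 _ Df2) A1 (D_ne_m1 _ Df1)).
  + by case/hasP: N2; exists f1.
  + by case/hasP: N1; exists f2.
- have cross f g : Q1 j e f -> Q2 j e g -> f = g.
    have [->{e e_ne0} /sink1-> /sink2-> //|e_ne_m1] := eqVneq e (-1).
    move=> /dom1 + /dom2; rewrite !inE (negbTE e_ne0) (negbTE e_ne_m1) /= => eD1 eD2.
    by move/allP: disjD => /(_ e eD1); rewrite eD2.
  rewrite /= !orbF.
  case/orP=> /andP[A1 _]; case/orP=> /andP[A2 _];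
    first [exact: fun1 A1 A2 | exact: fun2 A1 A2 | exact: cross A1 A2 | exact/esym/(cross _ _ A2 A1)].
Qed.

Fixpoint separated (f : eform n P) : Prop :=
  match f with
  | Var _ => True
  | Neg g => separated g
  | And g h => [/\ separated g, separated h & [disjoint ta g & ta h]]
  | Bel _ g => separated g
  end.

Lemma prop_ta (f : eform n P) : is_prop f -> ta f = set0.
Proof. by elim: f => //= g IHg h IHh /andP[/IHg-> /IHh->]; rewrite setU0. Qed.

Lemma prop_separated (f : eform n P) : is_prop f -> separated f.
Proof.
elim: f => //= g IHg h IHh /andP[g_prop h_prop].
by split; [exact: IHg | exact: IHh | rewrite prop_ta // -setI_eq0 set0I].
Qed.

Lemma DBI_normal_separated (f : eform n P) : DBI_normal f -> separated f.
Proof.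
elim=> {f} //= [i xi /prop_separated //|i xi f xi_prop _ f_sep _].
by split=> //; [exact: prop_separated | rewrite prop_ta // -setI_eq0 set0I].
Qed.

Lemma UAM_gt0 {phi : eform n P} {D Q pr} :
  UAM p0 phi D Q pr -> {in D, forall k, 0 < k}.
Proof.
elim=> {phi D Q pr}.
- by move=> i xi m _ m_gt0 k; rewrite inE => /eqP->.
- by move=> i psi D Q pr m _ IH m_gt0 _ k; rewrite inE => /predU1P[->|/IH].
- by move=> i xi psi D Q pr m _ _ IH m_gt0 _ k; rewrite inE => /predU1P[->|/IH].
- by move=> psi th D1 Q1 pr1 D2 Q2 pr2 _ IH1 _ IH2 _ k; rewrite mem_cat => /orP[/IH1|/IH2].
Qed.

Lemma UAM_pre0 {phi : eform n P} {D Q pr} : UAM p0 phi D Q pr -> pr 0 = Top p0.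
Proof.
elim=> {phi D Q pr} [i xi m _ m_gt0|i psi D Q pr m _ IH m_gt0 _|i xi psi D Q pr m _ _ IH m_gt0 _|
                     psi th D1 Q1 pr1 D2 Q2 pr2 _ IH1 _ IH2 _] /=; rewrite ?(lt_eqF m_gt0) //.
by case: ifP.
Qed.

Lemma UAM_pre_prop {phi : eform n P} {D Q pr} : UAM p0 phi D Q pr -> forall e, is_prop (pr e).
Proof.
by elim=> {phi D Q pr} [i xi m ? _|i psi D Q pr m _ ? _ _|i xi psi D Q pr m ? _ ? _ _|
                        psi th D1 Q1 pr1 D2 Q2 pr2 _ ? _ ? _] e /=; case: ifP.
Qed.

Lemma UAM_rel_dom {phi : eform n P} {D Q pr} : UAM p0 phi D Q pr -> rel_dom D Q.
Proof.
elim=> {phi D Q pr} [i xi m _ _|i psi D Q pr m _ IH _ _|i xi psi D Q pr m _ _ IH _ _|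
                     psi th D1 Q1 pr1 D2 Q2 pr2 _ IH1 _ IH2 _] j e f /=.
2,3: case: (j == i) => /or3P[/and3P[/IH eD _ _]|/andP[/eqP-> _]|/andP[/eqP-> _]];
  by rewrite !inE ?eqxx ?orbT //; rewrite !inE in eD; case/or3P: eD => ->; rewrite ?orbT.
- by rewrite !inE; case: (j == i) => /or3P[] /andP[/eqP-> _]; rewrite ?eqxx ?orbT.
- case/or4P=> [/and3P[/IH1 eD _ _]|/and3P[/IH2 eD _ _]|/and3P[/eqP-> _ _]|/and3P[/eqP-> _ _]] //;
  by rewrite !inE mem_cat in eD *; case/or3P: eD => ->; rewrite ?orbT.
Qed.

Lemma UAM_rel_sink {phi : eform n P} {D Q pr} : UAM p0 phi D Q pr -> rel_sink Q.
Proof.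
elim=> {phi D Q pr} [i xi m _ m_gt0|i psi D Q pr m _ IH m_gt0 _|i xi psi D Q pr m _ _ IH m_gt0 _|
                     psi th D1 Q1 pr1 D2 Q2 pr2 _ IH1 _ IH2 _] j f.
2,3: by case: (j == i) => /or3P[/and3P[/IH]|/andP[/eqP ?]|/andP[/eqP ?]] //; lia.
- by case: (j == i) => /or3P[] /andP[/eqP ? /eqP ?]; lia.
- by case/or4P=> [/and3P[/IH1]|/and3P[/IH2]|/and3P[/eqP]|/and3P[/eqP]].
Qed.

Lemma UAM_rel0_agents {phi : eform n P} {D Q pr} : UAM p0 phi D Q pr -> rel0_agents (ta phi) Q.
Proof.
elim=> {phi D Q pr} [i xi m _ m_gt0|i psi D Q pr m _ IH m_gt0 _|i xi psi D Q pr m _ _ IH m_gt0 _|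
                     psi th D1 Q1 pr1 D2 Q2 pr2 _ IH1 _ IH2 _] j f.
2,3: by rewrite in_set1; case: (j == i) => // /or3P[/and3P[_ /eqP]|/andP[_ /eqP->]|/andP[/eqP ?]] //; lia.
- by rewrite in_set1; case: (j == i) => // /or3P[] /andP[/eqP ? /eqP ?]; lia.
- rewrite in_setU.
  case/or4P=> [/and3P[_ /eqP]|/and3P[_ /eqP]|/and3P[_ _ /orP[/IH1|/IH2]]|/and3P[_ /eqP-> _]] //.
  + by move=> /[apply] ->.
  + by move=> /[apply] ->; rewrite orbT.
Qed.

Lemma UAM_functional {phi : eform n P} {D Q pr} :
  UAM p0 phi D Q pr -> separated phi -> rel_functional Q.
Proof.
elim=> {phi D Q pr} [i xi m _ m_gt0|i psi D Q pr m U IH m_gt0 mD|i xi psi D Q pr m _ U IH m_gt0 mD|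
                     psi th D1 Q1 pr1 D2 Q2 pr2 U1 IH1 U2 IH2 disjD] /=.
- move=> _ j e f1 f2.
  by case: (j == i) => /or3P[] /andP[/eqP ? /eqP ?] /or3P[] /andP[/eqP ? /eqP ?]; lia.
- by move/IH=> funQ; exact: bel_rel_functional m_gt0 mD (UAM_rel_dom U) funQ.
- by case=> _ /IH funQ _; exact: bel_rel_functional m_gt0 mD (UAM_rel_dom U) funQ.
- case=> /IH1 fun1 /IH2 fun2 disjT.
  exact: conj_rel_functional (UAM_gt0 U1) (UAM_gt0 U2) disjD disjT (UAM_rel_dom U1)
    (UAM_rel_dom U2) (UAM_rel_sink U1) (UAM_rel_sink U2) (UAM_rel0_agents U1)
    (UAM_rel0_agents U2) fun1 fun2.
Qed.

End ActionModelU.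

Lemma am_of_functional {n : nat} {P : Type} (D : seq int) (Q : 'I_n -> rel int)
    (pr : int -> eform n P) :
  rel_functional Q ->
  forall i (e f g : ev (am_of D Q pr)), arel _ i e f -> arel _ i e g -> f = g.
Proof.
move=> funQ i e [f Hf] [g Hg] /= Qef Qeg; have fg := funQ _ _ _ _ Qef Qeg; subst g.
by congr exist; apply: proof_irrelevance.
Qed.

Lemma update_defined_ev0 {n : nat} {P : Type} (p0 : P) (Mw : PKM n P) (D : seq int)
    (Q : 'I_n -> rel int) (pr : int -> eform n P) :
  pr 0%R = Top p0 -> update_defined Mw (am_of D Q pr) (ev0 D Q pr).
Proof. by rewrite /update_defined /= => ->; apply: sat_Top. Qed.

Theorem theorem7 (n : nat) (P : Type) (p0 : P) (phi : eform n P)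
  (D : seq int) (Q : 'I_n -> rel int) (pr : int -> eform n P) :
  1 < n -> is_DBI phi -> DBI_normal phi -> UAM p0 phi D Q pr ->
  forall Mw : PKM n P,
    update_defined Mw (am_of D Q pr) (ev0 D Q pr) /\
    update_defined (pupdate Mw (am_of D Q pr) (ev0 D Q pr)) (am_of D Q pr) (ev0 D Q pr) /\
    pk_iso (pupdate Mw (am_of D Q pr) (ev0 D Q pr))
           (pupdate (pupdate Mw (am_of D Q pr) (ev0 D Q pr)) (am_of D Q pr) (ev0 D Q pr)).
Proof.
move=> _ _ phi_normal U_phi Mw.
have pre0 := UAM_pre0 U_phi.
split; [exact: update_defined_ev0 pre0 | split; first exact: update_defined_ev0 pre0].
apply: pupdate_idem => [e|]; first exact: (UAM_pre_prop U_phi).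
exact/am_of_functional/(UAM_functional U_phi)/DBI_normal_separated.
Qed.
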